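(* Suppose $u_1$ is cyclically separable. For any Nash equilibrium $(\sigma_0^*,\sigma_1^*,\sigma_2^* )$ and any period-$t$ public history $h^t\in\mathrm{supp}(\mathbb{P}_t)$, the stage strategy $\sigma_1^*(h^t)$ is $u_1$-cyclically monotone.
   Context: Stage game. Three players $0,1,2$ have finite action sets $A_0,A_1,A_2$; $Y_0,Y_1$ are finite signal sets. Player 0 takes $a_0$, generating a signal $y_0\sim\rho_0(\cdot\mid a_0)$ observed only by player 1; players 1 and 2 then simultaneously take $a_1,a_2$, generating a public signal $y_1\sim\rho_1(\cdot\mid a_1,a_2)$. Assume: (i) $\rho_0(y_0\mid a_0)>0$ always; (ii) $\rho_1(y_1\mid a_1,a_2)>0$ implies $\rho_1(y_1\mid a_1,a_2')>0$; (iii) for every $a_2$ the vectors $(\rho_1(\cdot\mid a_1,a_2))_{a_1\in A_1}$ are linearly independent. Stage strategies: $\alpha_0\in\Delta(A_0)$, $\alpha_2\in\Delta(A_2)$, $s_1:Y_0\to\Delta(A_1)$. Payoffs $u_0:A_0\times A_1\to\mathbb{R}$, $u_i:Y_0\times A_1\times A_2\to\mathbb{R}$ extended by expectation; $u_1(\cdot,\alpha_2)$ is $(y_0,a_1)\mapsto\sum_{a_2}\alpha_2(a_2)u_1(y_0,a_1,a_2)$. Repeated game: periods $t=0,1,\dots$; player 1 long-lived with discount factor $\delta\in(0,1)$ and payoff $(1-\delta)\sum_t\delta^tu_1$; new myopic players 0 and 2 each period observe only the public history $h^t\in Y_1^t$. Player 1's type is drawn from a full-support prior on a countable set $\Omega$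 consisting of a rational type $\omega_R$ and commitment types $\omega_{s_1}$ that play $s_1$ every period. In a Nash equilibrium $(\sigma_0^*,\sigma_1^*,\sigma_2^* )$, $\sigma_1^*$ is the rational type's strategy (a map from public histories to stage strategies), and $\mathbb{P}_t$ is the induced distribution over period-$t$ public histories conditional on player 1 being rational. For $u:Y_0\times A_1\to\mathbb{R}$, $S\subset Y_0\times A_1$ is $u$-cyclically monotone if for every finite $\{(x_i,y_i)\}_{i=1}^N\subset S$ (with $y_{N+1}=y_1$), $\sum_iu(x_i,y_i)\ge\sum_iu(x_i,y_{i+1})$. $u_1$ is cyclically separable if any $S$ that is $u_1(\cdot,\alpha_2)$-cyclically monotone for some $\alpha_2$ is so for all $\alpha_2$. A stage strategy $s_1$ is $u_1$-cyclically monotone if $\{(y_0,a_1):a_1\in\mathrm{supp}(s_1(y_0))\}$ is $u_1(\cdot,\alpha_2)$-cyclically monotone for all $\alpha_2$. *)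

From HB Require Import structures.
From mathcomp Require Import all_boot all_order all_algebra.
From mathcomp Require Import all_classical all_reals all_analysis.
Set Implicit Arguments. Unset Strict Implicit. Unset Printing Implicit Defensive.
Import Order.TTheory GRing.Theory Num.Theory.
Local Open Scope ring_scope.

Section Model.
Variable R : realType.
Variables A0 A1 A2 Y0 Y1 : finType.

Definition is_dist (T : finType) (p : T -> R) :=
  (forall x, 0 <= p x) /\ \sum_(x : T) p x = 1.

Definition is_stage1 (s : Y0 -> A1 -> R) := forall y0, is_dist (s y0).

(** rho0 a0 y0 = rho_0(y0 | a0),  rho1 a1 a2 y1 = rho_1(y1 | a1, a2) *)
Variable rho0 : A0 -> Y0 -> R.
Variable rho1 : A1 -> A2 -> Y1 -> R.

Definition monitoring_assumptions :=
  [/\ (forall a0, is_dist (rho0 a0)),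
      (forall a1 a2, is_dist (rho1 a1 a2)),
      (forall a0 y0, 0 < rho0 a0 y0),
      (forall y1 a1 a2 a2', 0 < rho1 a1 a2 y1 -> 0 < rho1 a1 a2' y1) &
      (forall a2 (c : A1 -> R),
          (forall y1, \sum_(a1 : A1) c a1 * rho1 a1 a2 y1 = 0) ->
          forall a1, c a1 = 0)].

(** cyclic monotonicity of S ⊂ Y0 × A1 w.r.t. u : Y0 -> A1 -> R :
    for every finite list (x_1,y_1),...,(x_N,y_N) in S,
    sum_i u(x_i,y_i) >= sum_i u(x_i,y_{i+1}) with y_{N+1} = y_1. *)
Definition cyc_mono (u : Y0 -> A1 -> R) (S : pred (Y0 * A1)) :=
  forall s : seq (Y0 * A1), all S s ->
    \sum_(p <- zip (map fst s) (rot 1 (map snd s))) u p.1 p.2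
      <= \sum_(p <- s) u p.1 p.2.

Definition u1_at (u1 : Y0 -> A1 -> A2 -> R) (alpha2 : A2 -> R) : Y0 -> A1 -> R :=
  fun y0 a1 => \sum_(a2 : A2) alpha2 a2 * u1 y0 a1 a2.

Definition cyclically_separable (u1 : Y0 -> A1 -> A2 -> R) :=
  forall S : pred (Y0 * A1),
    (exists alpha2, is_dist alpha2 /\ cyc_mono (u1_at u1 alpha2) S) ->
    forall alpha2, is_dist alpha2 -> cyc_mono (u1_at u1 alpha2) S.

Definition stage_support (s : Y0 -> A1 -> R) : pred (Y0 * A1) :=
  fun p => s p.1 p.2 != 0.

Definition stage_cyc_mono (u1 : Y0 -> A1 -> A2 -> R) (s : Y0 -> A1 -> R) :=
  forall alpha2, is_dist alpha2 -> cyc_mono (u1_at u1 alpha2) (stage_support s).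

Definition sig1_prob (alpha0 : A0 -> R) (s : Y0 -> A1 -> R) (alpha2 : A2 -> R)
    (y1 : Y1) : R :=
  \sum_(a0 : A0) alpha0 a0 * \sum_(y0 : Y0) rho0 a0 y0 *
   \sum_(a1 : A1) s y0 a1 * \sum_(a2 : A2) alpha2 a2 * rho1 a1 a2 y1.

Definition stage_pay1 (u1 : Y0 -> A1 -> A2 -> R) (alpha0 : A0 -> R)
    (s : Y0 -> A1 -> R) (alpha2 : A2 -> R) : R :=
  \sum_(a0 : A0) alpha0 a0 * \sum_(y0 : Y0) rho0 a0 y0 *
   \sum_(a1 : A1) s y0 a1 * \sum_(a2 : A2) alpha2 a2 * u1 y0 a1 a2.

Definition stage_pay0 (u0 : A0 -> A1 -> R) (alpha0 : A0 -> R)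
    (s : Y0 -> A1 -> R) : R :=
  \sum_(a0 : A0) alpha0 a0 * \sum_(y0 : Y0) rho0 a0 y0 *
   \sum_(a1 : A1) s y0 a1 * u0 a0 a1.

Definition stage_pay2 (u2 : Y0 -> A1 -> A2 -> R) (alpha0 : A0 -> R)
    (s : Y0 -> A1 -> R) (alpha2 : A2 -> R) : R :=
  \sum_(a0 : A0) alpha0 a0 * \sum_(y0 : Y0) rho0 a0 y0 *
   \sum_(a1 : A1) s y0 a1 * \sum_(a2 : A2) alpha2 a2 * u2 y0 a1 a2.

(** Strategies (maps from public histories, listed chronologically). *)
Definition strat0 := seq Y1 -> A0 -> R.
Definition strat1 := seq Y1 -> Y0 -> A1 -> R.
Definition strat2 := seq Y1 -> A2 -> R.

Definition is_strat0 (sg : strat0) := forall h, is_dist (sg h).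
Definition is_strat1 (sg : strat1) := forall h, is_stage1 (sg h).
Definition is_strat2 (sg : strat2) := forall h, is_dist (sg h).

(** probability of the public history [pre ++ h] given that [pre] occurred *)
Fixpoint hist_prob_from (sg0 : strat0) (sg1 : strat1) (sg2 : strat2)
    (pre h : seq Y1) : R :=
  match h with
  | [::] => 1
  | y :: h' => sig1_prob (sg0 pre) (sg1 pre) (sg2 pre) y *
               hist_prob_from sg0 sg1 sg2 (rcons pre y) h'
  end.

Definition hist_prob sg0 sg1 sg2 (h : seq Y1) : R :=
  hist_prob_from sg0 sg1 sg2 [::] h.

Definition period_pay1 u1 sg0 sg1 sg2 (t : nat) : R :=
  \sum_(h : t.-tuple Y1)
     hist_prob sg0 sg1 sg2 h * stage_pay1 u1 (sg0 h) (sg1 h) (sg2 h).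

Definition disc_pay1 u1 (delta : R) sg0 sg1 sg2 : R :=
  (1 - delta) *
    limn (fun n => \sum_(0 <= t < n) delta ^+ t * period_pay1 u1 sg0 sg1 sg2 t).

(** Types: Omega countable, rational type omR, and each other type omega is
    the commitment type playing [commit omega] in every period. *)
Variable Omega : countType.

Definition type_strat (omR : Omega) (commit : Omega -> Y0 -> A1 -> R)
    (sg1 : strat1) (om : Omega) : strat1 :=
  fun h => if om == omR then sg1 h else commit om.

Definition prior_ok (mu : Omega -> R) :=
  (forall om, 0 < mu om) /\ (\esum_(om in [set: Omega]) (mu om)%:E = 1%E).

Definition types_ok (omR : Omega) (commit : Omega -> Y0 -> A1 -> R) :=
  (forall om, om != omR -> is_stage1 (commit om)) /\
  {in [pred om | om != omR] &, injective commit}.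

(** Unnormalized aggregate behaviour of player 1 at public history h:
    sum_om mu(om) P_om(h) s_om(h)(y0)(a1)  (= P(h) times the posterior-
    weighted stage strategy anticipated by the myopic players). *)
Definition agg_stage mu omR commit sg0 sg1 sg2 (h : seq Y1) : Y0 -> A1 -> R :=
  fun y0 a1 =>
    fine (\esum_(om in [set: Omega])
      (mu om * hist_prob sg0 (type_strat omR commit sg1 om) sg2 h
             * type_strat omR commit sg1 om h y0 a1)%:E).

Definition nash_eq u0 u1 u2 (delta : R) mu omR commit
    (sg0 : strat0) (sg1 : strat1) (sg2 : strat2) :=
  [/\ is_strat0 sg0, is_strat1 sg1, is_strat2 sg2 &
  [/\
   (forall sg1', is_strat1 sg1' ->
      disc_pay1 u1 delta sg0 sg1' sg2 <= disc_pay1 u1 delta sg0 sg1 sg2),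
   (forall h alpha0, is_dist alpha0 ->
      stage_pay0 u0 alpha0 (agg_stage mu omR commit sg0 sg1 sg2 h)
      <= stage_pay0 u0 (sg0 h) (agg_stage mu omR commit sg0 sg1 sg2 h)) &
   (forall h alpha2, is_dist alpha2 ->
      stage_pay2 u2 (sg0 h) (agg_stage mu omR commit sg0 sg1 sg2 h) alpha2
      <= stage_pay2 u2 (sg0 h) (agg_stage mu omR commit sg0 sg1 sg2 h) (sg2 h))]].

End Model.

From HB Require Import structures.
From mathcomp Require Import all_boot all_order all_algebra.
From mathcomp Require Import all_classical all_reals all_analysis.
Import Order.TTheory GRing.Theory Num.Theory.
Import numFieldNormedType.Exports.
Local Open Scope ring_scope.

Set Implicit Arguments. Unset Strict Implicit. Unset Printing Implicit Defensive.

(* Suppose the support of [sg1 h] contains a cycle (y0_1, a1_1), ..., (y0_N, a1_N)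
   such that playing a1_(i+1) instead of a1_i after each signal y0_i raises the
   total of u1(., sg2 h).  Moving a small mass eps along this cycle in the joint law of
   (y0, a1) at h keeps both marginals: the y0-marginal, so the result is still a
   stage strategy, and the a1-marginal, so the law of the public signal at h is
   unchanged.  Hence every history keeps its probability, and the discounted
   payoff of the rational type rises by (1 - delta) delta^t P(h) eps times the
   gain along the cycle, contradicting its optimality when P(h) > 0.  Cyclic
   separability then passes from u1(., sg2 h) to every alpha2. *)

Section FiniteSums.
Variable R : realType.

Lemma is_dist_mix (I J : finType) (w : I -> R) (F : I -> J -> R) :
  is_dist w -> (forall i, is_dist (F i)) ->
  is_dist (fun j => \sum_(i : I) w i * F i j).
Proof.
move=> [w_ge0 w_sum1] F_dist; split=> [j|].
  by apply: sumr_ge0 => i _; rewrite mulr_ge0 //; case: (F_dist i).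
rewrite exchange_big /= -w_sum1; apply: eq_bigr => i _.
by rewrite -mulr_sumr; case: (F_dist i) => _ ->; rewrite mulr1.
Qed.

Lemma norm_mix_le (I : finType) (w F : I -> R) (M : R) :
  is_dist w -> (forall i, `|F i| <= M) -> `|\sum_(i : I) w i * F i| <= M.
Proof.
move=> [w_ge0 w_sum1] F_le; apply: le_trans (ler_norm_sum _ _ _) _.
rewrite -[M]mul1r -w_sum1 mulr_suml; apply: ler_sum => i _.
by rewrite normrM ger0_norm // ler_wpM2l.
Qed.

Lemma mix_gt0 (I : finType) (w F : I -> R) :
  is_dist w -> (forall i, 0 < F i) -> 0 < \sum_(i : I) w i * F i.
Proof.
move=> [w_ge0 w_sum1] F_gt0.
have wF_ge0 i : 0 <= w i * F i by rewrite mulr_ge0 // ltW.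
rewrite lt_def sumr_ge0 // andbT psumr_neq0 //.
have /hasP[i i_in /= wi_gt0] : has (fun i => true && (0 < w i)) (index_enum I).
  by rewrite -psumr_neq0 // w_sum1 oner_neq0.
by apply/hasP; exists i; rewrite //= mulr_gt0.
Qed.

Lemma fin_fun_bounded (T : finType) (f : T -> R) : exists M, forall x, `|f x| <= M.
Proof. by exists (\sum_x `|f x|) => x; rewrite (bigD1 x) //= lerDl sumr_ge0. Qed.

Lemma sum_count_mem (T : finType) (l : seq T) (F : T -> R) :
  \sum_(x : T) (count_mem x l)%:R * F x = \sum_(x <- l) F x.
Proof.
elim: l => [|a l IH]; first by rewrite big_nil big1 // => x _; rewrite mul0r.
under eq_bigr do rewrite /= natrD mulrDl.
rewrite big_split /= IH big_cons (bigD1 a) //= eqxx mul1r big1 ?addr0 // => x.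
by rewrite eq_sym => /negbTE->; rewrite mul0r.
Qed.

Lemma sum_tuple_cons (T : finType) n (F : n.+1.-tuple T -> R) :
  \sum_(t : n.+1.-tuple T) F t = \sum_(y : T) \sum_(t : n.-tuple T) F [tuple of y :: t].
Proof.
rewrite pair_big /= (reindex (fun p : T * n.-tuple T => [tuple of p.1 :: p.2])) //=.
exists (fun t : n.+1.-tuple T => (thead t, behead_tuple t)).
  by move=> [y t] _ /=; congr pair; apply: val_inj.
by move=> t _; rewrite /= [in RHS](tuple_eta t).
Qed.

Lemma seq_lower_bound_gt0 (T : eqType) (l : seq T) (f : T -> R) :
  {in l, forall x, 0 < f x} -> exists2 e, 0 < e & {in l, forall x, e <= f x}.
Proof.
elim: l => [|a l IH] f_gt0; first by exists 1.
have [|e e_gt0 e_le] := IH; first by move=> x xl; rewrite f_gt0 // inE xl orbT.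
exists (Num.min e (f a)); first by rewrite lt_min e_gt0 f_gt0 // mem_head.
by move=> x; rewrite inE => /predU1P[->|/e_le]; rewrite ge_min ?lexx ?orbT // => ->.
Qed.

End FiniteSums.

Section CycleFlow.
Variables (R : realType) (X Y : finType).
Implicit Type l : seq (X * Y).

Definition cycle_pairs l := zip (map fst l) (rot 1 (map snd l)).

Definition cycle_flow l (x : X) (y : Y) : R :=
  (count_mem (x, y) (cycle_pairs l))%:R - (count_mem (x, y) l)%:R.

Lemma cycle_flow_sum l (U : X -> Y -> R) :
  \sum_x \sum_y cycle_flow l x y * U x y =
  \sum_(p <- cycle_pairs l) U p.1 p.2 - \sum_(p <- l) U p.1 p.2.
Proof.
rewrite pair_big /= -!(sum_count_mem _ (fun p => U p.1 p.2)) -sumrB.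
by apply: eq_bigr => -[x y] _; rewrite mulrBl.
Qed.

Lemma cycle_flow_row l x : \sum_y cycle_flow l x y = 0.
Proof.
have := cycle_flow_sum l (fun x' _ => (x' == x)%:R).
under eq_bigr do rewrite -mulr_suml.
rewrite (bigD1 x) //= eqxx mulr1 [X in _ + X]big1 ?addr0 => [->|x' /negbTE->];
  last by rewrite mulr0.
rewrite -!(big_map fst xpredT (fun x' => (x' == x)%:R)).
have -> : map fst (cycle_pairs l) = map fst l.
  by apply: unzip1_zip; rewrite size_rot !size_map.
by rewrite subrr.
Qed.

Lemma cycle_flow_col l y : \sum_x cycle_flow l x y = 0.
Proof.
have := cycle_flow_sum l (fun _ y' => (y' == y)%:R).
rewrite exchange_big /=; under eq_bigr do rewrite -mulr_suml.
rewrite (bigD1 y) //= eqxx mulr1 [X in _ + X]big1 ?addr0 => [->|y' /negbTE->];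
  last by rewrite mulr0.
rewrite -!(big_map snd xpredT (fun y' => (y' == y)%:R)).
have -> : map snd (cycle_pairs l) = rot 1 (map snd l).
  by apply: unzip2_zip; rewrite size_rot !size_map.
by rewrite (perm_big _ (permEl (perm_rot 1 _))) subrr.
Qed.

End CycleFlow.

Section StageDeviation.
Variables (R : realType) (A0 A1 A2 Y0 Y1 : finType).
Variables (rho0 : A0 -> Y0 -> R) (rho1 : A1 -> A2 -> Y1 -> R).
Hypothesis rho0_gt0 : forall a0 y0, 0 < rho0 a0 y0.
Variables (u1 : Y0 -> A1 -> A2 -> R) (alpha0 : A0 -> R).
Hypothesis alpha0_dist : is_dist alpha0.

Definition sig0_prob (y0 : Y0) : R := \sum_a0 alpha0 a0 * rho0 a0 y0.

Lemma sig0_prob_gt0 y0 : 0 < sig0_prob y0.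
Proof. exact: mix_gt0. Qed.

Lemma stage_sum_joint (s F : Y0 -> A1 -> R) :
  \sum_a0 alpha0 a0 * \sum_y0 rho0 a0 y0 * \sum_a1 s y0 a1 * F y0 a1 =
  \sum_y0 \sum_a1 sig0_prob y0 * s y0 a1 * F y0 a1.
Proof.
under eq_bigr do rewrite mulr_sumr.
rewrite exchange_big /=; apply: eq_bigr => y0 _.
under eq_bigr do rewrite mulrA.
by rewrite -mulr_suml mulr_sumr; apply: eq_bigr => a1 _; rewrite mulrA.
Qed.

Definition cycle_deviation (s : Y0 -> A1 -> R) (eps : R) (l : seq (Y0 * A1)) :=
  fun y0 a1 => s y0 a1 + eps / sig0_prob y0 * cycle_flow R l y0 a1.

Lemma joint_cycle_deviation s eps l y0 a1 :
  sig0_prob y0 * cycle_deviation s eps l y0 a1 =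
  sig0_prob y0 * s y0 a1 + eps * cycle_flow R l y0 a1.
Proof.
by rewrite mulrDr mulrA mulrCA mulfV ?mulr1 // gt_eqF ?sig0_prob_gt0.
Qed.

Lemma sum_joint_cycle_deviation s eps l (F : Y0 -> A1 -> R) :
  \sum_y0 \sum_a1 sig0_prob y0 * cycle_deviation s eps l y0 a1 * F y0 a1 =
  \sum_y0 \sum_a1 sig0_prob y0 * s y0 a1 * F y0 a1 +
  eps * \sum_y0 \sum_a1 cycle_flow R l y0 a1 * F y0 a1.
Proof.
rewrite mulr_sumr -big_split; apply: eq_bigr => y0 _.
rewrite mulr_sumr -big_split; apply: eq_bigr => a1 _.
by rewrite joint_cycle_deviation mulrDl mulrA.
Qed.

Lemma is_stage1_cycle_deviation s eps l :
  is_stage1 s -> 0 <= eps ->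
  {in l, forall p, eps * (size l)%:R <= sig0_prob p.1 * s p.1 p.2} ->
  is_stage1 (cycle_deviation s eps l).
Proof.
move=> s_ok eps_ge0 eps_small y0; split=> [a1|]; last first.
  by rewrite big_split /= -mulr_sumr cycle_flow_row mulr0 addr0; case: (s_ok y0).
rewrite -(pmulr_rge0 _ (sig0_prob_gt0 y0)) joint_cycle_deviation /cycle_flow.
set c := count_mem _ l.
have s_ge0 : 0 <= s y0 a1 by case: (s_ok y0).
have eps_c : eps * c%:R <= sig0_prob y0 * s y0 a1.
  have [->|c_gt0] := posnP c; first by rewrite mulr0 mulr_ge0 // ltW ?sig0_prob_gt0.
  apply: le_trans (eps_small (y0, a1) _); last by rewrite -has_pred1 has_count.
  by rewrite ler_wpM2l // ler_nat count_size.
by rewrite mulrBr addrCA addr_ge0 ?mulr_ge0 ?subr_ge0.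
Qed.

Lemma sig1_prob_cycle_deviation s eps l alpha2 y1 :
  sig1_prob rho0 rho1 alpha0 (cycle_deviation s eps l) alpha2 y1 =
  sig1_prob rho0 rho1 alpha0 s alpha2 y1.
Proof.
rewrite /sig1_prob !stage_sum_joint sum_joint_cycle_deviation [X in eps * X]exchange_big /=.
rewrite [X in eps * X]big1 ?mulr0 ?addr0 // => a1 _.
by rewrite -mulr_suml cycle_flow_col mul0r.
Qed.

Lemma stage_pay1_cycle_deviation s eps l alpha2 :
  stage_pay1 rho0 u1 alpha0 (cycle_deviation s eps l) alpha2 =
  stage_pay1 rho0 u1 alpha0 s alpha2 +
  eps * (\sum_(p <- cycle_pairs l) u1_at u1 alpha2 p.1 p.2 -
         \sum_(p <- l) u1_at u1 alpha2 p.1 p.2).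
Proof.
rewrite /stage_pay1 !(stage_sum_joint _ (u1_at u1 alpha2)).
by rewrite sum_joint_cycle_deviation cycle_flow_sum.
Qed.

Lemma exists_profitable_cycle_deviation s alpha2 l :
  is_stage1 s -> all (stage_support s) l ->
  \sum_(p <- l) u1_at u1 alpha2 p.1 p.2 <
    \sum_(p <- cycle_pairs l) u1_at u1 alpha2 p.1 p.2 ->
  exists2 s', is_stage1 s' &
    (forall alpha2' y1, sig1_prob rho0 rho1 alpha0 s' alpha2' y1 =
                        sig1_prob rho0 rho1 alpha0 s alpha2' y1) /\
    stage_pay1 rho0 u1 alpha0 s alpha2 < stage_pay1 rho0 u1 alpha0 s' alpha2.
Proof.
move=> s_ok /allP l_supp gain.
have [e e_gt0 e_le] : exists2 e, 0 < e &
    {in l, forall p, e <= sig0_prob p.1 * s p.1 p.2}.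
  apply: seq_lower_bound_gt0 => p /l_supp; rewrite /stage_support => s_neq0.
  by rewrite mulr_gt0 ?sig0_prob_gt0 // lt_def s_neq0 (s_ok p.1).1.
pose eps := e / (size l).+1%:R.
have eps_gt0 : 0 < eps by rewrite divr_gt0.
exists (cycle_deviation s eps l); last split.
- apply: is_stage1_cycle_deviation => //; first exact: ltW.
  move=> p /e_le; apply: le_trans.
  by rewrite /eps mulrAC ler_pdivrMr ?ltr0Sn // ler_wpM2l ?ler_nat // ltW.
- by move=> alpha2' y1; apply: sig1_prob_cycle_deviation.
- by rewrite stage_pay1_cycle_deviation ltrDl mulr_gt0 ?subr_gt0.
Qed.

End StageDeviation.

Section Discounting.
Variable R : realType.

Lemma discounted_series_cvg (d M : R) (x : nat -> R) :
  0 <= d < 1 -> (forall n, `|x n| <= M) -> cvgn (series (fun n => d ^+ n * x n)).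
Proof.
move=> /andP[d_ge0 d_lt1] x_le; apply: (@normed_cvg R R^o).
have M_ge0 : 0 <= M := le_trans (normr_ge0 _) (x_le 0%N).
apply: (@series_le_cvg R _ (geometric M d)) => [n|n|n|].
- exact: normr_ge0.
- by rewrite mulr_ge0 ?exprn_ge0.
- by rewrite /= normrM ger0_norm ?exprn_ge0 // mulrC ler_wpM2r ?exprn_ge0.
- by apply: is_cvg_geometric_series; rewrite ger0_norm.
Qed.

Lemma limn_eventually_addr (S S' : nat -> R) (c : R) (t : nat) :
  cvgn S -> (forall n, (t < n)%N -> S' n = S n + c) -> limn S' = limn S + c.
Proof.
move=> S_cvg S'E; apply: cvg_lim => //.
apply: cvg_trans (cvgD S_cvg (cvg_cst c)); apply: near_eq_cvg; near=> n.
rewrite /= S'E //; near: n; exact: nbhs_infty_gt.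
Unshelve. all: by end_near.
Qed.

End Discounting.

Section Histories.
Variables (R : realType) (A0 A1 A2 Y0 Y1 : finType).
Variables (rho0 : A0 -> Y0 -> R) (rho1 : A1 -> A2 -> Y1 -> R).
Hypothesis rho0_dist : forall a0, is_dist (rho0 a0).
Hypothesis rho1_dist : forall a1 a2, is_dist (rho1 a1 a2).
Variables (u1 : Y0 -> A1 -> A2 -> R) (sg0 : strat0 R A0 Y1) (sg2 : strat2 R A2 Y1).
Hypotheses (sg0_ok : is_strat0 sg0) (sg2_ok : is_strat2 sg2).

Lemma is_dist_sig1_prob alpha0 s alpha2 :
  is_dist alpha0 -> is_stage1 s -> is_dist alpha2 ->
  is_dist (sig1_prob rho0 rho1 alpha0 s alpha2).
Proof. by move=> ? ? ?; do 4![apply: is_dist_mix => // ?]. Qed.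

Lemma norm_stage_pay1_le alpha0 s alpha2 M :
  is_dist alpha0 -> is_stage1 s -> is_dist alpha2 ->
  (forall y0 a1 a2, `|u1 y0 a1 a2| <= M) -> `|stage_pay1 rho0 u1 alpha0 s alpha2| <= M.
Proof. by move=> ? ? ? ?; do 4![apply: norm_mix_le => // ?]. Qed.

Lemma is_dist_hist_prob_from sg1 : is_strat1 sg1 ->
  forall n pre, is_dist (fun h : n.-tuple Y1 => hist_prob_from rho0 rho1 sg0 sg1 sg2 pre h).
Proof.
move=> sg1_ok; elim=> [|n IH] pre.
  have hist0 (h : 0.-tuple Y1) : hist_prob_from rho0 rho1 sg0 sg1 sg2 pre h = 1.
    by rewrite tuple0.
  by split=> [h|]; rewrite ?hist0 // (eq_bigr _ (fun h _ => hist0 h)) sumr_const card_tuple.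
have [sig1_ge0 sig1_sum1] := is_dist_sig1_prob (sg0_ok pre) (sg1_ok pre) (sg2_ok pre).
split=> [h|].
  rewrite [h]tuple_eta /=; apply: mulr_ge0 => //; exact: (IH _).1 (behead_tuple h).
rewrite (sum_tuple_cons (fun h : n.+1.-tuple Y1 => hist_prob_from rho0 rho1 sg0 sg1 sg2 pre h)).
rewrite -sig1_sum1; apply: eq_bigr => y _ /=.
by rewrite -mulr_sumr (IH _).2 mulr1.
Qed.

Lemma period_pay1_bounded sg1 : is_strat1 sg1 ->
  exists M, forall n, `|period_pay1 rho0 rho1 u1 sg0 sg1 sg2 n| <= M.
Proof.
move=> sg1_ok; have [M u1_le] := fin_fun_bounded (fun p : Y0 * A1 * A2 => u1 p.1.1 p.1.2 p.2).
exists M => n; apply: norm_mix_le => [|h]; first exact: is_dist_hist_prob_from.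
by apply: norm_stage_pay1_le => // y0 a1 a2; apply: (u1_le (y0, a1, a2)).
Qed.

Definition deviate_at (sg1 : strat1 R A1 Y0 Y1) (h : seq Y1) (s' : Y0 -> A1 -> R) :
  strat1 R A1 Y0 Y1 := fun pre => if pre == h then s' else sg1 pre.

Lemma deviate_at_here sg1 h s' : deviate_at sg1 h s' h = s'.
Proof. by rewrite /deviate_at eqxx. Qed.

Lemma deviate_at_elsewhere sg1 h s' pre : pre != h -> deviate_at sg1 h s' pre = sg1 pre.
Proof. by rewrite /deviate_at => /negbTE->. Qed.

Lemma is_strat1_deviate_at sg1 h s' :
  is_strat1 sg1 -> is_stage1 s' -> is_strat1 (deviate_at sg1 h s').
Proof. by move=> sg1_ok s'_ok pre; rewrite /deviate_at; case: eqP. Qed.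

Variables (sg1 : strat1 R A1 Y0 Y1) (t : nat) (h : t.-tuple Y1) (s' : Y0 -> A1 -> R).
Hypothesis same_signals :
  sig1_prob rho0 rho1 (sg0 h) s' (sg2 h) =1 sig1_prob rho0 rho1 (sg0 h) (sg1 h) (sg2 h).

Lemma hist_prob_from_deviate_at pre h' :
  hist_prob_from rho0 rho1 sg0 (deviate_at sg1 h s') sg2 pre h' =
  hist_prob_from rho0 rho1 sg0 sg1 sg2 pre h'.
Proof.
elim: h' pre => [|y h' IH] pre //=; rewrite IH /deviate_at.
by case: eqP => [->|] //; rewrite same_signals.
Qed.

Lemma period_pay1_deviate_at n :
  period_pay1 rho0 rho1 u1 sg0 (deviate_at sg1 h s') sg2 n =
  period_pay1 rho0 rho1 u1 sg0 sg1 sg2 n + (n == t)%:R *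
    (hist_prob rho0 rho1 sg0 sg1 sg2 h *
     (stage_pay1 rho0 u1 (sg0 h) s' (sg2 h) - stage_pay1 rho0 u1 (sg0 h) (sg1 h) (sg2 h))).
Proof.
rewrite /period_pay1 /hist_prob; under eq_bigr do rewrite hist_prob_from_deviate_at.
have [n_t|n_neq_t] := eqVneq n t; last first.
  rewrite mul0r addr0; apply: eq_bigr => h' _; rewrite deviate_at_elsewhere //.
  by apply: contra_neq n_neq_t => /(congr1 size); rewrite !size_tuple.
subst n; rewrite mul1r (bigD1 h) //= [in RHS](bigD1 h) //= deviate_at_here.
under [in LHS]eq_bigr => i i_neq_h do rewrite deviate_at_elsewhere //.
by rewrite [RHS]addrC addrA mulrBr subrK.
Qed.

Lemma disc_pay1_deviate_at delta : is_strat1 sg1 -> 0 <= delta < 1 ->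
  disc_pay1 rho0 rho1 u1 delta sg0 (deviate_at sg1 h s') sg2 =
  disc_pay1 rho0 rho1 u1 delta sg0 sg1 sg2 + (1 - delta) * (delta ^+ t *
    (hist_prob rho0 rho1 sg0 sg1 sg2 h *
     (stage_pay1 rho0 u1 (sg0 h) s' (sg2 h) - stage_pay1 rho0 u1 (sg0 h) (sg1 h) (sg2 h)))).
Proof.
move=> sg1_ok delta_01; have [M period_le] := period_pay1_bounded sg1_ok.
rewrite /disc_pay1 -mulrDr; congr (_ * _).
apply: (limn_eventually_addr (t := t) (discounted_series_cvg delta_01 period_le)) => N t_lt_N.
under eq_bigr do rewrite period_pay1_deviate_at mulrDr.
rewrite big_split /=; congr (_ + _).
rewrite (bigD1_seq t) ?mem_index_iota ?iota_uniq //= eqxx mul1r big1 ?addr0 //.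
by move=> n /negbTE->; rewrite mul0r mulr0.
Qed.

End Histories.

Theorem lemma5 (R : realType) (A0 A1 A2 Y0 Y1 : finType)
    (rho0 : A0 -> Y0 -> R) (rho1 : A1 -> A2 -> Y1 -> R)
    (u0 : A0 -> A1 -> R) (u1 u2 : Y0 -> A1 -> A2 -> R)
    (delta : R) (Omega : countType) (omR : Omega)
    (commit : Omega -> Y0 -> A1 -> R) (mu : Omega -> R)
    (sg0 : strat0 R A0 Y1) (sg1 : strat1 R A1 Y0 Y1) (sg2 : strat2 R A2 Y1) :
  monitoring_assumptions rho0 rho1 ->
  0 < delta < 1 ->
  types_ok omR commit ->
  prior_ok mu ->
  cyclically_separable u1 ->
  nash_eq rho0 rho1 u0 u1 u2 delta mu omR commit sg0 sg1 sg2 ->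
  forall (t : nat) (h : t.-tuple Y1),
    0 < hist_prob rho0 rho1 sg0 sg1 sg2 h ->
    stage_cyc_mono u1 (sg1 h).
Proof.
move=> [rho0_dist rho1_dist rho0_gt0 _ _] /andP[delta_gt0 delta_lt1] _ _ csep.
move=> [sg0_ok sg1_ok sg2_ok [no_dev _ _]] t h h_gt0 alpha2 alpha2_dist.
apply: (csep _ _ alpha2 alpha2_dist); exists (sg2 h); split=> // l l_supp.
rewrite leNgt; apply/negP => gain.
have [s' s'_ok [same_signals better]] :=
  exists_profitable_cycle_deviation rho1 rho0_gt0 (sg0_ok h) (sg1_ok h) l_supp gain.
have := no_dev _ (is_strat1_deviate_at h sg1_ok s'_ok).
rewrite (disc_pay1_deviate_at rho0_dist rho1_dist u1 sg0_ok sg2_ok (same_signals _)) //;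
  last by rewrite ltW.
rewrite gerDl leNgt => /negP; apply.
by rewrite !mulr_gt0 ?subr_gt0 ?exprn_gt0.
Qed.
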